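(* Let $\mathcal{G}=(G,\odot,\leq)$ be a real continuous Alo-group with $G$ an open interval of $\mathbb{R}$ and identity $e$. For all $\tilde a=[a^-,a^+],\tilde b\in[G]$: (1) $\|\tilde a\|_{[\mathcal{G}]}=\|\tilde a^{(-1)}\|_{[\mathcal{G}]}$; (2) $a^-\leq\|\tilde a\|_{[\mathcal{G}]}$ and $a^+\leq\|\tilde a\|_{[\mathcal{G}]}$; (3) $\|\tilde a\|_{[\mathcal{G}]}\geq e$; (4) $\|\tilde a\|_{[\mathcal{G}]}=e\iff a^-=a^+=e$; (5) $\|\tilde a\odot_{[G]}\tilde b\|_{[\mathcal{G}]}\leq\|\tilde a\|_{[\mathcal{G}]}\odot\|\tilde b\|_{[\mathcal{G}]}$.
   Context: An Alo-group $(G,\odot,\leq)$ is an Abelian group with a weak order $\leq$ such that $a\leq b\Rightarrow a\odot c\leq b\odot c$; real means $G\subseteq\mathbb{R}$ with the usual order, continuous means $\odot$ is continuous. $a^{(-1)}$ is the inverse of $a$. The $\mathcal{G}$-norm is $\|a\|_{\mathcal{G}}=\max\{a,a^{(-1)}\}$. $[G]=\{[a^-,a^+]: a^-,a^+\in G,\ a^-\leq a^+\}$. The reciprocal interval is $\tilde a^{(-1)}=[(a^+)^{(-1)},(a^-)^{(-1)}]$, and $\tilde a\odot_{[G]}\tilde b=\{a\odot b: a\in\tilde a, b\in\tilde b\}$. The $[\mathcal{G}]$-norm is $\|\tilde a\|_{[\mathcal{G}]}=\max\{\|a^-\|_{\mathcal{G}},\|a^+\|_{\mathcal{G}}\}\in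 G$. *)

From Stdlib Require Import Reals.
From Coquelicot Require Import Rbar.
Open Scope R_scope.

Definition G_open_interval (G : R -> Prop) : Prop :=
  exists lo hi : Rbar, forall x, G x <-> (Rbar_lt lo (Finite x) /\ Rbar_lt (Finite x) hi).

Definition op_continuous (G : R -> Prop) (op : R -> R -> R) : Prop :=
  forall x y, G x -> G y ->
  forall eps, 0 < eps -> exists delta, 0 < delta /\
    forall x' y', G x' -> G y' -> Rabs (x' - x) < delta -> Rabs (y' - y) < delta ->
      Rabs (op x' y' - op x y) < eps.

Definition real_alo_group (G : R -> Prop) (op : R -> R -> R) (e : R) (inv : R -> R) : Prop :=
  (forall a b, G a -> G b -> G (op a b)) /\
  (forall a b c, G a -> G b -> G c -> op (op a b) c = op a (op b c)) /\
  (forall a b, G a -> G b -> op a b = op b a) /\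
  G e /\
  (forall a, G a -> op a e = a) /\
  (forall a, G a -> G (inv a) /\ op a (inv a) = e) /\
  (forall a b c, G a -> G b -> G c -> a <= b -> op a c <= op b c).

Definition gnorm (inv : R -> R) (a : R) : R := Rmax a (inv a).

Definition inorm (inv : R -> R) (am ap : R) : R := Rmax (gnorm inv am) (gnorm inv ap).

Definition cl_int (am ap x : R) : Prop := am <= x <= ap.

(* the set  {a (.) b : a in [am,ap], b in [bm,bp]}  (the [G]-product, as a set) *)
Definition iprod_set (op : R -> R -> R) (am ap bm bp : R) (x : R) : Prop :=
  exists a b, cl_int am ap a /\ cl_int bm bp b /\ x = op a b.

(* Since a ↦ a^(-1) is an order-reversing involution fixing e, the G-norm
   ||a|| = max{a, a^(-1)} is at least e, with equality only at e, and ||a ⊙ b|| <= ||a|| ⊙ ||b|| by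
   monotonicity of ⊙; the interval norm inherits these properties.  For the
   product of intervals, any x in [a^- ⊙ b^-, a^+ ⊙ b^+] is hit explicitly:
   x = a^- ⊙ (x ⊙ (a^-)^(-1)) when x <= a^- ⊙ b^+, and x = (x ⊙ (b^+)^(-1)) ⊙ b^+
   otherwise. *)
From Stdlib Require Import Reals Lra.
From Coquelicot Require Import Rbar.
Open Scope R_scope.

Lemma open_interval_convex (G : R -> Prop) : G_open_interval G ->
  forall x y z, G x -> G z -> x <= y <= z -> G y.
Proof.
  intros [lo [hi HG]] x y z Gx Gz [Hxy Hyz].
  apply HG in Gx as [Hlo _]; apply HG in Gz as [_ Hhi]; apply HG; split.
  - apply Rbar_lt_le_trans with x; [exact Hlo | exact Hxy].
  - apply Rbar_le_lt_trans with z; [exact Hyz | exact Hhi].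
Qed.

Lemma G_Rmax (G : R -> Prop) x y : G x -> G y -> G (Rmax x y).
Proof. intros; apply Rmax_case; assumption. Qed.

Lemma cl_int_endpoints am ap bm bp : am <= ap -> bm <= bp ->
  (forall x, cl_int am ap x <-> cl_int bm bp x) -> am = bm /\ ap = bp.
Proof.
  unfold cl_int; intros Ha Hb Heq.
  pose proof (proj1 (Heq am) (conj (Rle_refl am) Ha)).
  pose proof (proj1 (Heq ap) (conj Ha (Rle_refl ap))).
  pose proof (proj2 (Heq bm) (conj (Rle_refl bm) Hb)).
  pose proof (proj2 (Heq bp) (conj Hb (Rle_refl bp))).
  lra.
Qed.

Lemma inorm_le_iff inv am ap c : inorm inv am ap <= c <->
  am <= c /\ inv am <= c /\ ap <= c /\ inv ap <= c.
Proof. unfold inorm, gnorm, Rmax; repeat destruct Rle_dec; lra. Qed.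

Lemma le_inorm inv am ap :
  am <= inorm inv am ap /\ inv am <= inorm inv am ap /\
  ap <= inorm inv am ap /\ inv ap <= inorm inv am ap.
Proof. apply inorm_le_iff, Rle_refl. Qed.

Section AloGroup.
Variables (G : R -> Prop) (op : R -> R -> R) (e : R) (inv : R -> R).
Hypothesis Halo : real_alo_group G op e inv.

Lemma G_op a b : G a -> G b -> G (op a b).
Proof. destruct Halo as [h _]; auto. Qed.

Lemma op_assoc a b c : G a -> G b -> G c -> op (op a b) c = op a (op b c).
Proof. destruct Halo as [_ [h _]]; auto. Qed.

Lemma op_comm a b : G a -> G b -> op a b = op b a.
Proof. destruct Halo as [_ [_ [h _]]]; auto. Qed.

Lemma G_e : G e.
Proof. destruct Halo as [_ [_ [_ [h _]]]]; exact h. Qed.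

Lemma op_e_r a : G a -> op a e = a.
Proof. destruct Halo as [_ [_ [_ [_ [h _]]]]]; auto. Qed.

Lemma G_inv a : G a -> G (inv a).
Proof. destruct Halo as [_ [_ [_ [_ [_ [h _]]]]]]; intros; apply h; auto. Qed.

Lemma op_inv_r a : G a -> op a (inv a) = e.
Proof. destruct Halo as [_ [_ [_ [_ [_ [h _]]]]]]; intros; apply h; auto. Qed.

Lemma op_le_l a b c : G a -> G b -> G c -> a <= b -> op a c <= op b c.
Proof. destruct Halo as [_ [_ [_ [_ [_ [_ h]]]]]]; auto. Qed.

Hint Resolve G_op G_e G_inv : core.

Lemma op_e_l a : G a -> op e a = a.
Proof. intros; rewrite op_comm; auto using op_e_r. Qed.

Lemma op_opK a b : G a -> G b -> op (op a b) (inv b) = a.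
Proof. intros; rewrite op_assoc, op_inv_r, op_e_r; auto. Qed.

Lemma op_cancel_l a b c : G a -> G b -> G c -> op c a = op c b -> a = b.
Proof.
  intros Ga Gb Gc E.
  rewrite <- (op_opK a c), <- (op_opK b c), (op_comm a c), (op_comm b c), E; auto.
Qed.

Lemma inv_involutive a : G a -> inv (inv a) = a.
Proof.
  intros Ga; apply (op_cancel_l _ _ (inv a)); auto.
  rewrite op_inv_r, op_comm, op_inv_r; auto.
Qed.

Lemma inv_e : inv e = e.
Proof. rewrite <- (op_e_l (inv e)), op_inv_r; auto. Qed.

Lemma inv_op a b : G a -> G b -> inv (op a b) = op (inv a) (inv b).
Proof.
  intros Ga Gb; apply (op_cancel_l _ _ (op a b)); auto.
  rewrite op_inv_r, <- op_assoc, (op_comm a b), op_opK, op_inv_r; auto.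
Qed.

Lemma op_le_r a b c : G a -> G b -> G c -> a <= b -> op c a <= op c b.
Proof. intros; rewrite (op_comm c a), (op_comm c b); auto using op_le_l. Qed.

Lemma op_le2 a b c d : G a -> G b -> G c -> G d -> a <= b -> c <= d ->
  op a c <= op b d.
Proof. intros; apply Rle_trans with (op b c); auto using op_le_l, op_le_r. Qed.

Lemma inv_le_contravar a b : G a -> G b -> a <= b -> inv b <= inv a.
Proof.
  intros Ga Gb Hab.
  pose proof (op_le_l _ _ (op (inv a) (inv b)) Ga Gb ltac:(auto) Hab) as H.
  rewrite <- !op_assoc, op_inv_r, op_e_l, (op_comm b (inv a)), op_opK in H; auto.
Qed.

Lemma inv_le_e a : G a -> inv a <= e -> e <= a.
Proof.
  intros Ga H; rewrite <- (inv_involutive a), <- inv_e; auto using inv_le_contravar.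
Qed.

Lemma op_inv_between a b c x : G a -> G b -> G c -> G x ->
  op b a <= x <= op c a -> b <= op x (inv a) <= c.
Proof.
  intros Ga Gb Gc Gx [Hb Hc].
  rewrite <- (op_opK b a), <- (op_opK c a) by auto.
  split; apply op_le_l; auto.
Qed.

Lemma G_gnorm a : G a -> G (gnorm inv a).
Proof. intros; unfold gnorm; apply G_Rmax; auto. Qed.

Lemma G_inorm am ap : G am -> G ap -> G (inorm inv am ap).
Proof. intros; unfold inorm; apply G_Rmax; auto using G_gnorm. Qed.

Lemma gnorm_inv a : G a -> gnorm inv (inv a) = gnorm inv a.
Proof. intros; unfold gnorm; rewrite inv_involutive, Rmax_comm; auto. Qed.

Lemma gnorm_ge_e a : G a -> e <= gnorm inv a.
Proof.
  intros Ga; unfold gnorm; destruct (Rle_dec e a).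
  - apply Rle_trans with a; auto using Rmax_l.
  - apply Rle_trans with (inv a); [|apply Rmax_r].
    rewrite <- inv_e; apply inv_le_contravar; auto; lra.
Qed.

Lemma gnorm_op_le a b : G a -> G b ->
  gnorm inv (op a b) <= op (gnorm inv a) (gnorm inv b).
Proof.
  intros; unfold gnorm at 1; rewrite inv_op by auto.
  apply Rmax_lub; apply op_le2; auto using G_gnorm; unfold gnorm; auto using Rmax_l, Rmax_r.
Qed.

Lemma inorm_reciprocal am ap : G am -> G ap ->
  inorm inv am ap = inorm inv (inv ap) (inv am).
Proof. intros; unfold inorm; rewrite !gnorm_inv, Rmax_comm; auto. Qed.

Lemma inorm_ge_e am ap : G am -> e <= inorm inv am ap.
Proof.
  intros; apply Rle_trans with (gnorm inv am); auto using gnorm_ge_e.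
  unfold inorm; apply Rmax_l.
Qed.

Lemma inorm_eq_e am ap : G am -> G ap -> inorm inv am ap = e <-> am = e /\ ap = e.
Proof.
  intros Gam Gap; split.
  - intros E; destruct (le_inorm inv am ap) as [? [? [? ?]]]; rewrite E in *.
    pose proof (inv_le_e am Gam); pose proof (inv_le_e ap Gap); lra.
  - intros [-> ->]; unfold inorm, gnorm; rewrite inv_e; unfold Rmax; repeat destruct Rle_dec; lra.
Qed.

Lemma inorm_op_le am ap bm bp : G am -> G ap -> G bm -> G bp ->
  inorm inv (op am bm) (op ap bp) <= op (inorm inv am ap) (inorm inv bm bp).
Proof.
  intros; unfold inorm at 1.
  apply Rmax_lub; eapply Rle_trans; try apply gnorm_op_le; auto;
    apply op_le2; auto using G_gnorm, G_inorm; unfold inorm; auto using Rmax_l, Rmax_r.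
Qed.

Lemma iprod_set_cl_int am ap bm bp : G_open_interval G ->
  G am -> G ap -> am <= ap -> G bm -> G bp -> bm <= bp ->
  forall x, iprod_set op am ap bm bp x <-> cl_int (op am bm) (op ap bp) x.
Proof.
  intros HG Gam Gap Ha Gbm Gbp Hb x; unfold iprod_set, cl_int; split.
  - intros [a [b [Hxa [Hxb ->]]]].
    assert (G a) by (apply (open_interval_convex G HG am a ap); auto).
    assert (G b) by (apply (open_interval_convex G HG bm b bp); auto).
    split; apply op_le2; tauto.
  - intros Hx.
    assert (Gx : G x) by (apply (open_interval_convex G HG (op am bm) x (op ap bp)); auto).
    destruct (Rle_dec x (op am bp)).
    + exists am, (op x (inv am)); split; [split; lra|]; split.
      * apply op_inv_between; auto; rewrite (op_comm bm), (op_comm bp); auto; lra.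
      * rewrite (op_comm x), <- op_assoc, op_inv_r, op_e_l; auto.
    + exists (op x (inv bp)), bp; split; [|split; [split; lra|]].
      * apply op_inv_between; auto; lra.
      * rewrite op_assoc, (op_comm (inv bp)), op_inv_r, op_e_r; auto.
Qed.

End AloGroup.

Theorem proposition6 (G : R -> Prop) (op : R -> R -> R) (e : R) (inv : R -> R)
  (HG : G_open_interval G) (Halo : real_alo_group G op e inv) (Hcont : op_continuous G op)
  (am ap bm bp : R)
  (Ham : G am) (Hap : G ap) (Ha : am <= ap)
  (Hbm : G bm) (Hbp : G bp) (Hb : bm <= bp) :
  (* (1) the reciprocal interval [ap^(-1), am^(-1)] has the same norm *)
  inorm inv am ap = inorm inv (inv ap) (inv am) /\
  (* (2) *)
  am <= inorm inv am ap /\ ap <= inorm inv am ap /\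
  (* (3) *)
  e <= inorm inv am ap /\
  (* (4) *)
  (inorm inv am ap = e <-> (am = e /\ ap = e)) /\
  (* (5) the [G]-product is an element [cm, cp] of [G], and its norm is bounded *)
  (exists cm cp, G cm /\ G cp /\ cm <= cp /\
     forall x, iprod_set op am ap bm bp x <-> cl_int cm cp x) /\
  (forall cm cp, G cm -> G cp -> cm <= cp ->
     (forall x, iprod_set op am ap bm bp x <-> cl_int cm cp x) ->
     inorm inv cm cp <= op (inorm inv am ap) (inorm inv bm bp)).
Proof.
  pose proof (iprod_set_cl_int G op e inv Halo am ap bm bp HG Ham Hap Ha Hbm Hbp Hb)
    as Hprod.
  pose proof (G_op G op e inv Halo am bm Ham Hbm) as Gcm.
  pose proof (G_op G op e inv Halo ap bp Hap Hbp) as Gcp.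
  pose proof (op_le2 G op e inv Halo am ap bm bp Ham Hap Hbm Hbp Ha Hb) as Hc.
  destruct (le_inorm inv am ap) as [Ham_le [_ [Hap_le _]]].
  split; [apply (inorm_reciprocal G op e); assumption |].
  split; [exact Ham_le |].
  split; [exact Hap_le |].
  split; [apply (inorm_ge_e G op e inv Halo); assumption |].
  split; [apply (inorm_eq_e G op e inv Halo); assumption |].
  split; [exists (op am bm), (op ap bp); tauto |].
  intros cm cp _ _ Hc' Heq.
  destruct (cl_int_endpoints cm cp (op am bm) (op ap bp)) as [-> ->]; auto.
  - intros x; rewrite <- Heq; apply Hprod.
  - apply (inorm_op_le G op e inv Halo); assumption.
Qed.
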